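(* The bidual $\mathcal R^{**}$ of Read's space $\mathcal R=(c_0,|||\cdot|||)$ is strictly convex; that is, for all $\bar x,\bar y$ in the unit sphere of $\mathcal R^{**}$ with $\bar x\ne\bar y$ one has $|||\bar x+\bar y|||<2$ (bidual norm).
   Context: Let $c_{00}(\mathbb Q)$ be the set of finitely supported sequences with rational coefficients, and let $(u_n)_{n\in\mathbb N}$ be a sequence in $c_{00}(\mathbb Q)$ which lists every element of $c_{00}(\mathbb Q)$ infinitely many times. Let $(a_n)_{n\in\mathbb N}$ be a strictly increasing sequence of positive integers with $a_n>\max\operatorname{supp} u_n$ and $a_n>\|u_n\|_1$ for every $n$. $(e_n)$ denotes the canonical unit vectors and $\langle x,y\rangle=\sum_n x_ny_n$. Read's norm on $c_0$ is $|||x||| = \|x\|_\infty + \sum_{n} 2^{-a_n^2}|\langle x, u_n - e_{a_n}\rangle|$, and Read's space is $\mathcal R=(c_0,|||\cdot|||)$ (real scalars). A Banach space is strictly convex if its unit sphere contains no nontrivial segment. *)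

From Stdlib Require Import Reals QArith Qreals.
From Coquelicot Require Import Coquelicot.
Open Scope R_scope.

Fixpoint fsum (f : nat -> R) (n : nat) : R :=
  match n with O => 0 | S m => fsum f m + f m end.

Definition c0 (x : nat -> R) : Prop := is_lim_seq x 0.

Definition sup_norm (x : nat -> R) : R :=
  real (Lub_Rbar (fun r => exists k, r = Rabs (x k))).

(* <x, u_n - e_{a_n}>, where supp u_n lies below a_n *)
Definition read_pair (a : nat -> nat) (u : nat -> nat -> Q) (x : nat -> R) (n : nat) : R :=
  fsum (fun k => x k * Q2R (u n k)) (a n) - x (a n).

Definition read_norm (a : nat -> nat) (u : nat -> nat -> Q) (x : nat -> R) : R :=
  sup_norm x + Series (fun n => / 2 ^ (a n * a n) * Rabs (read_pair a u x n)).

Definition c00Q (v : nat -> Q) : Prop := exists N, forall k, (N <= k)%nat -> (v k == 0)%Q.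

Definition read_data (a : nat -> nat) (u : nat -> nat -> Q) : Prop :=
  (forall v : nat -> Q, c00Q v -> forall m, exists n, (m <= n)%nat /\ forall k, (u n k == v k)%Q) /\
  (forall n, (0 < a n)%nat) /\ (forall n, (a n < a (S n))%nat) /\
  (forall n k, ~ (u n k == 0)%Q -> (k < a n)%nat) /\
  (forall n, fsum (fun k => Rabs (Q2R (u n k))) (a n) < INR (a n)).

(* Dual R^* : bounded linear functionals on (c_0, |||.|||) (only their values on c_0 matter) *)
Definition dual_elt a u (f : (nat -> R) -> R) : Prop :=
  (forall x y (al be : R), c0 x -> c0 y ->
      f (fun k => al * x k + be * y k) = al * f x + be * f y) /\
  (exists C, forall x, c0 x -> Rabs (f x) <= C * read_norm a u x).

Definition dual_norm a u (f : (nat -> R) -> R) : R :=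
  real (Lub_Rbar (fun r => exists x, c0 x /\ read_norm a u x <= 1 /\ r = Rabs (f x))).

Definition bidual_elt a u (P : ((nat -> R) -> R) -> R) : Prop :=
  (forall f g (al be : R), dual_elt a u f -> dual_elt a u g ->
      P (fun x => al * f x + be * g x) = al * P f + be * P g) /\
  (exists C, forall f, dual_elt a u f -> Rabs (P f) <= C * dual_norm a u f).

Definition bidual_norm a u (P : ((nat -> R) -> R) -> R) : R :=
  real (Lub_Rbar (fun r => exists f, dual_elt a u f /\ dual_norm a u f <= 1 /\ r = Rabs (P f))).

Definition bidual_eq a u (P Q : ((nat -> R) -> R) -> R) : Prop :=
  forall f, dual_elt a u f -> P f = Q f.

From Stdlib Require Import Reals QArith Qreals Lia Lra FunctionalExtensionality Classical.
From Coquelicot Require Import Coquelicot.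
Open Scope R_scope.

(* Every f in R^* is determined by the summable sequence f(e_k), and an element
   P of R^** by the bounded sequence x_k = P(e_k^* ) of its coordinates: P f is
   the limit of f on the truncations of x.  Testing P against the functionals
   sign(x_k) e_k^* + sum_{n<M} 2^{-a_n^2} sign<x, u_n - e_{a_n}> (u_n - e_{a_n})^*
   gives ||P|| = |||x|||, so R^** is isometric to (l_infty, |||.|||).  If
   |||x||| = |||y||| = 1 and |||x + y||| = 2, equality in each term of the series
   forces <x, u_n - e_{a_n}> and <y, u_n - e_{a_n}> to have the same sign for
   every n; as the u_n run through all rational combinations of e_i and e_j, this
   makes x and y proportional, hence equal. *)

Lemma fsum_ext (f g : nat -> R) n :
  (forall k, (k < n)%nat -> f k = g k) -> fsum f n = fsum g n.
Proof.
  induction n as [|n IH]; intros H; simpl; [reflexivity|].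
  f_equal; [apply IH; intros k Hk|]; apply H; lia.
Qed.

Lemma fsum_plus (f g : nat -> R) n : fsum (fun k => f k + g k) n = fsum f n + fsum g n.
Proof. induction n as [|n IH]; simpl; [ring|]. rewrite IH; ring. Qed.

Lemma fsum_scal c (f : nat -> R) n : fsum (fun k => c * f k) n = c * fsum f n.
Proof. induction n as [|n IH]; simpl; [ring|]. rewrite IH; ring. Qed.

Lemma fsum_le (f g : nat -> R) n :
  (forall k, (k < n)%nat -> f k <= g k) -> fsum f n <= fsum g n.
Proof.
  induction n as [|n IH]; intros H; simpl; [lra|].
  apply Rplus_le_compat; [apply IH; intros k Hk|]; apply H; lia.
Qed.

Lemma Rabs_fsum_le (f : nat -> R) n : Rabs (fsum f n) <= fsum (fun k => Rabs (f k)) n.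
Proof.
  induction n as [|n IH]; simpl; [rewrite Rabs_R0; lra|].
  eapply Rle_trans; [apply Rabs_triang|lra].
Qed.

Lemma fsum_nonneg (f : nat -> R) n : (forall k, 0 <= f k) -> 0 <= fsum f n.
Proof. intros H; induction n as [|n IH]; simpl; [lra|]. specialize (H n); lra. Qed.

Lemma fsum_indicator c i n :
  fsum (fun k => if Nat.eqb k i then c else 0) n = if Nat.ltb i n then c else 0.
Proof.
  induction n as [|n IH]; simpl; [destruct i; reflexivity|]. rewrite IH.
  destruct (Nat.eqb_spec n i), (Nat.ltb_spec i n), (Nat.ltb_spec i (S n)); try lia; lra.
Qed.

Lemma fsum_skip_prefix (g : nat -> R) K L :
  fsum (fun k => if Nat.ltb k K then 0 else g k) L + fsum g (Nat.min K L) = fsum g L.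
Proof.
  induction L as [|L IH]; simpl; [rewrite Nat.min_0_r; simpl; ring|].
  destruct (Nat.ltb_spec L K).
  - rewrite Nat.min_r in * by lia. simpl. lra.
  - rewrite Nat.min_l in * by lia. lra.
Qed.

Lemma fsum_S_sum_n (f : nat -> R) n : fsum f (S n) = sum_n f n.
Proof.
  induction n as [|n IH]; [simpl; rewrite sum_O; ring|].
  rewrite sum_Sn, <- IH. reflexivity.
Qed.

Lemma sum_n_nonneg_incr (a : nat -> R) :
  (forall n, 0 <= a n) -> forall n, sum_n a n <= sum_n a (S n).
Proof. intros Ha n. rewrite sum_Sn. specialize (Ha (S n)). unfold plus; simpl; lra. Qed.

Lemma ex_series_le_of_fsum_le (a : nat -> R) c :
  (forall n, 0 <= a n) -> (forall M, fsum a M <= c) -> ex_series a /\ Series a <= c.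
Proof.
  intros Ha Hc.
  assert (Hb : forall n, sum_n a n <= c) by (intros n; rewrite <- fsum_S_sum_n; apply Hc).
  destruct (ex_finite_lim_seq_incr _ _ (sum_n_nonneg_incr a Ha) Hb) as [l Hl].
  split; [exists l; exact Hl|].
  rewrite (is_series_unique _ _ Hl).
  exact (is_lim_seq_le _ _ _ _ Hb Hl (is_lim_seq_const c)).
Qed.

Lemma fsum_le_Series (a : nat -> R) M :
  (forall n, 0 <= a n) -> ex_series a -> fsum a M <= Series a.
Proof.
  intros Ha [l Hl]. rewrite (is_series_unique _ _ Hl).
  assert (Hl' : is_lim_seq (sum_n a) l) by exact Hl.
  assert (Hle := is_lim_seq_incr_compare _ _ Hl' (sum_n_nonneg_incr a Ha)).
  destruct M as [|M].
  - specialize (Hle O). rewrite sum_O in Hle. specialize (Ha O). simpl; lra.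
  - rewrite fsum_S_sum_n. apply Hle.
Qed.

Lemma Series_nonneg (a : nat -> R) : (forall n, 0 <= a n) -> ex_series a -> 0 <= Series a.
Proof. intros Ha Hex. exact (fsum_le_Series a 0 Ha Hex). Qed.

Lemma nonneg_Series_le_0 (a : nat -> R) :
  (forall n, 0 <= a n) -> ex_series a -> Series a <= 0 -> forall n, a n = 0.
Proof.
  intros Ha Hex H0 n.
  assert (Hn := fsum_le_Series a (S n) Ha Hex). simpl in Hn.
  assert (Hs := fsum_nonneg a n Ha). specialize (Ha n). lra.
Qed.

Lemma Series_tail_lt (a : nat -> R) :
  ex_series a -> forall eps, 0 < eps ->
  exists K0, forall K, (K0 <= K)%nat -> Series a - fsum a K < eps.
Proof.
  intros Hex eps Heps.
  assert (Hl : is_lim_seq (sum_n a) (Series a)) by exact (Series_correct _ Hex).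
  apply is_lim_seq_spec in Hl. destruct (Hl (mkposreal eps Heps)) as [N HN]; simpl in HN.
  exists (S N). intros [|K] HK; [lia|].
  rewrite fsum_S_sum_n. specialize (HN K ltac:(lia)). apply Rabs_def2 in HN. lra.
Qed.

Lemma real_Lub_Rbar_le (E : R -> Prop) M :
  0 <= M -> (forall r, E r -> r <= M) -> real (Lub_Rbar E) <= M.
Proof.
  intros HM HE. destruct (Lub_Rbar_correct E) as [_ Hlub].
  specialize (Hlub M HE). destruct (Lub_Rbar E); simpl in *; tauto.
Qed.

Lemma le_real_Lub_Rbar (E : R -> Prop) M r :
  (forall r, E r -> r <= M) -> E r -> r <= real (Lub_Rbar E).
Proof.
  intros HE Hr. destruct (Lub_Rbar_correct E) as [Hub Hlub].
  specialize (Hlub M HE). specialize (Hub r Hr). destruct (Lub_Rbar E); simpl in *; tauto.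
Qed.

Lemma sign_mult_self r : sign r * r = Rabs r.
Proof.
  destruct (Rtotal_order r 0) as [H|[H|H]].
  - rewrite sign_eq_m1, Rabs_left; lra.
  - subst; rewrite sign_0, Rabs_R0; ring.
  - rewrite sign_eq_1, Rabs_right; lra.
Qed.

Lemma Rabs_sign_le r : Rabs (sign r) <= 1.
Proof.
  destruct (Rtotal_order r 0) as [H|[H|H]];
    [rewrite sign_eq_m1 | subst; rewrite sign_0 | rewrite sign_eq_1]; auto;
    unfold Rabs; destruct Rcase_abs; lra.
Qed.

Lemma Rabs_sign_mult_le r y : Rabs (sign r * y) <= Rabs y.
Proof. rewrite Rabs_mult. assert (Hs := Rabs_sign_le r). assert (Hy := Rabs_pos y). nra. Qed.

Lemma Rabs_plus_eq_mult_nonneg p q : Rabs (p + q) = Rabs p + Rabs q -> 0 <= p * q.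
Proof. unfold Rabs; repeat destruct Rcase_abs; intros; nra. Qed.

Lemma Q2R_approx r : exists q : Q, Rabs (Q2R q - r) <= / 2.
Proof.
  exists (Qmake (up (2 * r)) 2). unfold Q2R; simpl.
  destruct (archimed (2 * r)). rewrite Rabs_right; lra.
Qed.

Definition unit_vec (k : nat) : nat -> R := fun j => if Nat.eqb j k then 1 else 0.
Definition trunc (K : nat) (z : nat -> R) : nat -> R := fun j => if Nat.ltb j K then z j else 0.
Definition tail (K : nat) (z : nat -> R) : nat -> R := fun j => if Nat.ltb j K then 0 else z j.

Lemma c0_bounded x : c0 x -> exists B, forall k, Rabs (x k) <= B.
Proof.
  intros Hx. apply is_lim_seq_spec in Hx.
  destruct (Hx (mkposreal 1 Rlt_0_1)) as [N HN]; simpl in HN.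
  exists (fsum (fun k => Rabs (x k)) N + 1). intros k.
  assert (Hs := fsum_nonneg (fun k => Rabs (x k)) N (fun k => Rabs_pos _)).
  destruct (Compare_dec.le_lt_dec N k) as [Hk|Hk].
  - specialize (HN k Hk). rewrite Rminus_0_r in HN. lra.
  - assert (Hle : Rabs (x k) <= fsum (fun k => Rabs (x k)) N).
    { clear HN Hs; induction Hk; simpl.
      + assert (Hs := fsum_nonneg (fun k => Rabs (x k)) k (fun k => Rabs_pos _)); lra.
      + assert (Hm := Rabs_pos (x m)); lra. }
    lra.
Qed.

Lemma c0_scal x c : c0 x -> c0 (fun k => c * x k).
Proof.
  intros Hx. assert (H := is_lim_seq_scal_l x c 0 Hx).
  simpl in H. rewrite Rmult_0_r in H. exact H.
Qed.

Lemma c0_eventually_0 x N : (forall k, (N <= k)%nat -> x k = 0) -> c0 x.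
Proof.
  intros H. apply (is_lim_seq_ext_loc (fun _ => 0) x 0).
  - exists N; intros k Hk; symmetry; auto.
  - apply is_lim_seq_const.
Qed.

Lemma c0_zero : c0 (fun _ => 0).
Proof. apply (c0_eventually_0 _ O); reflexivity. Qed.

Lemma c0_unit_vec k : c0 (unit_vec k).
Proof.
  apply (c0_eventually_0 _ (S k)). intros j Hj. unfold unit_vec.
  destruct (Nat.eqb_spec j k); [lia|reflexivity].
Qed.

Lemma c0_trunc K z : c0 (trunc K z).
Proof.
  apply (c0_eventually_0 _ K). intros j Hj. unfold trunc.
  destruct (Nat.ltb_spec j K); [lia|reflexivity].
Qed.

Lemma c0_tail K z : c0 z -> c0 (tail K z).
Proof.
  apply (is_lim_seq_ext_loc z (tail K z) 0). exists K. intros j Hj. unfold tail.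
  destruct (Nat.ltb_spec j K); [lia|reflexivity].
Qed.

Lemma trunc_add_tail K z j : z j = trunc K z j + tail K z j.
Proof. unfold trunc, tail. destruct (Nat.ltb j K); ring. Qed.

(** * Read's norm on bounded sequences *)

Definition weight (a : nat -> nat) (n : nat) : R := / 2 ^ (a n * a n).

Definition read_term (a : nat -> nat) (u : nat -> nat -> Q) (x : nat -> R) (n : nat) : R :=
  weight a n * Rabs (read_pair a u x n).

Lemma read_norm_unfold a u x : read_norm a u x = sup_norm x + Series (read_term a u x).
Proof. reflexivity. Qed.

Lemma weight_pos a n : 0 < weight a n.
Proof. apply Rinv_0_lt_compat, pow_lt; lra. Qed.

Lemma read_term_nonneg a u x n : 0 <= read_term a u x n.
Proof. apply Rmult_le_pos; [apply Rlt_le, weight_pos | apply Rabs_pos]. Qed.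

Lemma pow_half_le m n : (m <= n)%nat -> (/ 2) ^ n <= (/ 2) ^ m.
Proof.
  intros H. rewrite !pow_inv. apply Rinv_le_contravar; [apply pow_lt; lra|].
  apply Rle_pow; [lra|exact H].
Qed.

Lemma succ_div_pow2_square_le (A : nat) :
  (INR A + 1) / 2 ^ (A * A) <= 4 * (/ 2) ^ A * (/ 2) ^ A.
Proof.
  assert (Hnat : (S A * 2 ^ (A + A) <= 4 * 2 ^ (A * A))%nat).
  { assert (HA : (S A <= 2 ^ A)%nat) by exact (Nat.pow_gt_lin_r 2 A ltac:(lia)).
    apply (Nat.le_trans _ (2 ^ (A + (A + A)))).
    - rewrite !Nat.pow_add_r. apply Nat.mul_le_mono_r, HA.
    - replace (4 * 2 ^ (A * A))%nat with (2 ^ (A * A + 2))%nat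
        by (rewrite Nat.pow_add_r; change (2 ^ 2)%nat with 4%nat; ring).
      apply Nat.pow_le_mono_r; [lia | destruct A as [|[|A]]; nia]. }
  apply le_INR in Hnat. rewrite !mult_INR, !pow_INR, S_INR, pow_add in Hnat.
  replace (INR 2) with 2 in Hnat by (simpl; ring). replace (INR 4) with 4 in Hnat by (simpl; ring).
  rewrite !pow_inv.
  assert (Hp : 0 < 2 ^ A) by (apply pow_lt; lra).
  assert (Hq : 0 < 2 ^ (A * A)) by (apply pow_lt; lra).
  apply (Rmult_le_reg_r (2 ^ (A * A) * (2 ^ A * 2 ^ A)));
    [repeat apply Rmult_lt_0_compat; assumption|].
  replace ((INR A + 1) / 2 ^ (A * A) * (2 ^ (A * A) * (2 ^ A * 2 ^ A)))
    with ((INR A + 1) * (2 ^ A * 2 ^ A)) by (field; lra).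
  replace (4 * / 2 ^ A * / 2 ^ A * (2 ^ (A * A) * (2 ^ A * 2 ^ A)))
    with (4 * 2 ^ (A * A)) by (field; lra).
  exact Hnat.
Qed.

(* [sup_norm] and [Series] return junk values on unbounded sequences, hence the
   explicit bounds [B] below. *)
Lemma sup_norm_ge x B k : (forall j, Rabs (x j) <= B) -> Rabs (x k) <= sup_norm x.
Proof.
  intros Hx. apply (le_real_Lub_Rbar _ B); [intros r [j ->]; apply Hx | exists k; reflexivity].
Qed.

Lemma sup_norm_le x B : (forall j, Rabs (x j) <= B) -> sup_norm x <= B.
Proof.
  intros Hx. apply real_Lub_Rbar_le; [|intros r [j ->]; apply Hx].
  eapply Rle_trans; [apply Rabs_pos|apply (Hx O)].
Qed.

Lemma sup_norm_nonneg x B : (forall j, Rabs (x j) <= B) -> 0 <= sup_norm x.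
Proof. intros Hx. eapply Rle_trans; [apply Rabs_pos|apply (sup_norm_ge x B O Hx)]. Qed.

Lemma sup_norm_scal_le x B c :
  (forall j, Rabs (x j) <= B) -> sup_norm (fun k => c * x k) <= Rabs c * sup_norm x.
Proof.
  intros Hx. apply sup_norm_le. intros k. rewrite Rabs_mult.
  apply Rmult_le_compat_l; [apply Rabs_pos|apply (sup_norm_ge x B k Hx)].
Qed.

Lemma sup_norm_scal x B c :
  (forall j, Rabs (x j) <= B) -> sup_norm (fun k => c * x k) = Rabs c * sup_norm x.
Proof.
  intros Hx. apply Rle_antisym; [apply (sup_norm_scal_le x B c Hx)|].
  destruct (Req_dec c 0) as [->|Hc].
  - rewrite Rabs_R0, Rmult_0_l.
    apply (sup_norm_nonneg _ 0). intros j. rewrite Rmult_0_l, Rabs_R0. lra.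
  - assert (Hcx : forall j, Rabs (c * x j) <= Rabs c * B).
    { intros j. rewrite Rabs_mult. apply Rmult_le_compat_l; [apply Rabs_pos|apply Hx]. }
    assert (Hinv := sup_norm_scal_le _ _ (/ c) Hcx). cbv beta in Hinv.
    replace (fun k => / c * (c * x k)) with x in Hinv
      by (extensionality k; field; exact Hc).
    rewrite Rabs_inv in Hinv. assert (Hpos : 0 < Rabs c) by (apply Rabs_pos_lt, Hc).
    apply (Rmult_le_compat_l (Rabs c)) in Hinv; [|lra].
    rewrite <- Rmult_assoc, Rinv_r, Rmult_1_l in Hinv by (apply Rabs_no_R0, Hc). exact Hinv.
Qed.

Section ReadNorm.

Variables (a : nat -> nat) (u : nat -> nat -> Q).
Hypothesis a_gt : forall n, (n < a n)%nat.
Hypothesis u_l1 : forall n, fsum (fun k => Rabs (Q2R (u n k))) (a n) <= INR (a n).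

Lemma weight_tail_le K n :
  (K <= a n)%nat -> weight a n * (INR (a n) + 1) <= 4 * (/ 2) ^ K * (/ 2) ^ n.
Proof.
  intros HK. unfold weight. rewrite Rmult_comm.
  eapply Rle_trans; [apply succ_div_pow2_square_le|].
  assert (H1 := pow_half_le K (a n) HK).
  assert (H2 := pow_half_le n (a n) (Nat.lt_le_incl _ _ (a_gt n))).
  assert (H3 : 0 < (/ 2) ^ (a n)) by (apply pow_lt; lra).
  assert (H4 : 0 < (/ 2) ^ n) by (apply pow_lt; lra).
  nra.
Qed.

Lemma weighted_series_tail (t : nat -> R) B K :
  (forall n, 0 <= t n) ->
  (forall n, t n <= B * (weight a n * (INR (a n) + 1))) ->
  (forall n, (a n < K)%nat -> t n = 0) ->
  ex_series t /\ Series t <= 8 * B * (/ 2) ^ K.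
Proof.
  intros Ht0 Ht HtK.
  assert (HB : 0 <= B).
  { assert (Hw : 0 < weight a O * (INR (a O) + 1)).
    { apply Rmult_lt_0_compat; [apply weight_pos|]. assert (Ha := pos_INR (a O)); lra. }
    specialize (Ht0 O); specialize (Ht O). nra. }
  assert (HK : 0 < (/ 2) ^ K) by (apply pow_lt; lra).
  set (g := fun n => 4 * B * (/ 2) ^ K * (/ 2) ^ n).
  assert (Hg : is_series g (8 * B * (/ 2) ^ K)).
  { replace (8 * B * (/ 2) ^ K) with (4 * B * (/ 2) ^ K * / (1 - / 2)) by field.
    assert (Hgeom : is_series (fun n => (/ 2) ^ n) (/ (1 - / 2)))
      by (apply is_series_geom; rewrite Rabs_right; lra).
    apply (is_series_scal_l (4 * B * (/ 2) ^ K)) in Hgeom. exact Hgeom. }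
  assert (Htg : forall n, 0 <= t n <= g n).
  { intros n. split; [apply Ht0|]. unfold g.
    assert (Hn : 0 < (/ 2) ^ n) by (apply pow_lt; lra).
    destruct (Compare_dec.le_lt_dec K (a n)) as [HKn|HKn].
    - eapply Rle_trans; [apply Ht|]. assert (Hw := weight_tail_le K n HKn). nra.
    - rewrite (HtK n HKn). repeat apply Rmult_le_pos; lra. }
  split.
  - apply (ex_series_le t g); [|exists (8 * B * (/ 2) ^ K); exact Hg].
    intros n. change (norm (t n)) with (Rabs (t n)). rewrite Rabs_pos_eq; apply Htg.
  - rewrite <- (is_series_unique g _ Hg). apply Series_le; [exact Htg|].
    exists (8 * B * (/ 2) ^ K); exact Hg.
Qed.

Lemma read_pair_ext z z' n :
  (forall k, (k <= a n)%nat -> z k = z' k) -> read_pair a u z n = read_pair a u z' n.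
Proof.
  intros H. unfold read_pair. rewrite (H (a n)) by lia. f_equal.
  apply fsum_ext. intros k Hk. rewrite H by lia. reflexivity.
Qed.

Lemma read_pair_lin x y al be n :
  read_pair a u (fun k => al * x k + be * y k) n
  = al * read_pair a u x n + be * read_pair a u y n.
Proof.
  unfold read_pair.
  rewrite (fsum_ext _ (fun k => al * (x k * Q2R (u n k)) + be * (y k * Q2R (u n k))))
    by (intros; ring).
  rewrite fsum_plus, !fsum_scal. ring.
Qed.

Lemma read_pair_bound z n B :
  (forall k, (k <= a n)%nat -> Rabs (z k) <= B) ->
  Rabs (read_pair a u z n) <= B * (INR (a n) + 1).
Proof.
  intros Hz. assert (HB : 0 <= B) by (eapply Rle_trans; [apply Rabs_pos|apply (Hz O); lia]).
  unfold read_pair. eapply Rle_trans; [apply Rabs_triang|]. rewrite Rabs_Ropp.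
  assert (Hsum : Rabs (fsum (fun k => z k * Q2R (u n k)) (a n)) <= B * INR (a n)).
  { eapply Rle_trans; [apply Rabs_fsum_le|].
    eapply Rle_trans; [apply (fsum_le _ (fun k => B * Rabs (Q2R (u n k))))|].
    - intros k Hk. rewrite Rabs_mult.
      apply Rmult_le_compat_r; [apply Rabs_pos|apply Hz; lia].
    - rewrite fsum_scal. apply Rmult_le_compat_l; [exact HB|apply u_l1]. }
  assert (Hlast := Hz (a n) (le_n _)). lra.
Qed.

Lemma read_terms_summable x B :
  (forall k, Rabs (x k) <= B) ->
  ex_series (read_term a u x) /\ Series (read_term a u x) <= 8 * B.
Proof.
  intros Hx. replace (8 * B) with (8 * B * (/ 2) ^ 0) by (simpl; ring).
  apply weighted_series_tail; [apply read_term_nonneg| |intros n Hn; lia].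
  intros n. unfold read_term. rewrite <- Rmult_assoc, (Rmult_comm B), Rmult_assoc.
  apply Rmult_le_compat_l; [apply Rlt_le, weight_pos|].
  apply read_pair_bound. intros k _. apply Hx.
Qed.

Lemma read_norm_ge_sup x B :
  (forall k, Rabs (x k) <= B) -> sup_norm x <= read_norm a u x.
Proof.
  intros Hx. destruct (read_terms_summable x B Hx) as [Hex _].
  assert (H := Series_nonneg _ (read_term_nonneg a u x) Hex).
  rewrite read_norm_unfold. lra.
Qed.

Lemma Rabs_le_read_norm x B k :
  (forall j, Rabs (x j) <= B) -> Rabs (x k) <= read_norm a u x.
Proof.
  intros Hx. eapply Rle_trans; [apply (sup_norm_ge x B k Hx)|apply (read_norm_ge_sup x B Hx)].
Qed.

Lemma read_norm_nonneg x B : (forall k, Rabs (x k) <= B) -> 0 <= read_norm a u x.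
Proof. intros Hx. eapply Rle_trans; [apply Rabs_pos|apply (Rabs_le_read_norm x B O Hx)]. Qed.

Lemma read_norm_le x B : (forall k, Rabs (x k) <= B) -> read_norm a u x <= 9 * B.
Proof.
  intros Hx. destruct (read_terms_summable x B Hx) as [_ Hs].
  assert (Hsup := sup_norm_le x B Hx). rewrite read_norm_unfold. lra.
Qed.

Lemma read_norm_zero x : (forall k, x k = 0) -> read_norm a u x = 0.
Proof.
  intros Hx. assert (H0 : forall k, Rabs (x k) <= 0) by (intros k; rewrite Hx, Rabs_R0; lra).
  assert (H1 := read_norm_nonneg x 0 H0). assert (H2 := read_norm_le x 0 H0). lra.
Qed.

Lemma read_norm_scal x B c :
  (forall k, Rabs (x k) <= B) -> read_norm a u (fun k => c * x k) = Rabs c * read_norm a u x.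
Proof.
  intros Hx. rewrite !read_norm_unfold, (sup_norm_scal x B c Hx).
  rewrite (Series_ext _ (fun n => Rabs c * read_term a u x n)), Series_scal_l; [ring|].
  intros n. unfold read_term.
  rewrite (read_pair_ext _ (fun k => c * x k + 0 * x k)) by (intros; ring).
  rewrite read_pair_lin, Rmult_0_l, Rplus_0_r, Rabs_mult. ring.
Qed.

Lemma read_norm_trunc x B K :
  (forall k, Rabs (x k) <= B) ->
  read_norm a u (trunc K x) <= read_norm a u x + 8 * B * (/ 2) ^ K.
Proof.
  intros Hx.
  assert (Hsup : sup_norm (trunc K x) <= sup_norm x).
  { apply sup_norm_le. intros k. unfold trunc. destruct (Nat.ltb k K).
    - apply (sup_norm_ge x B k Hx).
    - rewrite Rabs_R0. apply (sup_norm_nonneg x B Hx). }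
  set (t := read_term a u (tail K x)).
  destruct (weighted_series_tail t B K) as [Hte Hts].
  - apply read_term_nonneg.
  - intros n. unfold t, read_term. rewrite <- Rmult_assoc, (Rmult_comm B), Rmult_assoc.
    apply Rmult_le_compat_l; [apply Rlt_le, weight_pos|].
    apply read_pair_bound. intros k _. unfold tail. destruct (Nat.ltb k K); [|apply Hx].
    rewrite Rabs_R0. eapply Rle_trans; [apply Rabs_pos|apply (Hx O)].
  - intros n Hn. unfold t, read_term.
    rewrite (read_pair_ext _ (fun k => 0 * x k + 0 * x k)), read_pair_lin.
    + rewrite !Rmult_0_l, Rplus_0_l, Rabs_R0. ring.
    + intros k Hk. unfold tail. destruct (Nat.ltb_spec k K); [ring|lia].
  - destruct (read_terms_summable x B Hx) as [Hxe _].
    assert (Hle : Series (read_term a u (trunc K x)) <= Series (fun n => read_term a u x n + t n)).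
    { apply Series_le; [|exact (ex_series_plus _ _ Hxe Hte)].
      intros n. split; [apply read_term_nonneg|]. unfold t, read_term.
      rewrite (read_pair_ext (trunc K x) (fun k => 1 * x k + (-1) * tail K x k))
        by (intros k _; rewrite (trunc_add_tail K x k); ring).
      rewrite read_pair_lin, <- Rmult_plus_distr_l.
      apply Rmult_le_compat_l; [apply Rlt_le, weight_pos|].
      eapply Rle_trans; [apply Rabs_triang|]. rewrite !Rabs_mult, Rabs_R1.
      rewrite (Rabs_left (-1)) by lra. lra. }
    rewrite Series_plus in Hle by assumption. rewrite !read_norm_unfold. lra.
Qed.

(** * The dual space *)

Definition coord (k : nat) (z : nat -> R) : R := z k.

Lemma dual_lin f x y al be z :
  dual_elt a u f -> c0 x -> c0 y -> (forall k, z k = al * x k + be * y k) ->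
  f z = al * f x + be * f y.
Proof.
  intros [Hlin _] Hx Hy Hz.
  replace z with (fun k => al * x k + be * y k) by (extensionality k; rewrite Hz; reflexivity).
  apply Hlin; assumption.
Qed.

Lemma dual_scal f z c : dual_elt a u f -> c0 z -> f (fun k => c * z k) = c * f z.
Proof. intros Hf Hz. rewrite (dual_lin f z z c 0 _ Hf Hz Hz) by (intros; ring). ring. Qed.

Lemma dual_zero f z : dual_elt a u f -> (forall k, z k = 0) -> f z = 0.
Proof.
  intros Hf Hz. rewrite (dual_lin f _ _ 0 0 z Hf c0_zero c0_zero) by (intros k; rewrite Hz; ring).
  ring.
Qed.

Lemma dual_bound f :
  dual_elt a u f -> exists C, 0 <= C /\ forall x, c0 x -> Rabs (f x) <= C * read_norm a u x.
Proof.
  intros [_ [C HC]]. exists (Rabs C). split; [apply Rabs_pos|]. intros x Hx.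
  destruct (c0_bounded x Hx) as [B HB].
  eapply Rle_trans; [apply HC, Hx|].
  apply Rmult_le_compat_r; [apply (read_norm_nonneg x B HB)|apply Rle_abs].
Qed.

Lemma dual_norm_le f M :
  0 <= M -> (forall x, c0 x -> read_norm a u x <= 1 -> Rabs (f x) <= M) -> dual_norm a u f <= M.
Proof. intros HM H. apply real_Lub_Rbar_le; [exact HM|]. intros r (x & Hx & Hn & ->). auto. Qed.

Lemma Rabs_le_dual_norm f x :
  dual_elt a u f -> c0 x -> read_norm a u x <= 1 -> Rabs (f x) <= dual_norm a u f.
Proof.
  intros Hf Hx Hn. destruct (dual_bound f Hf) as [C [HC0 HC]].
  apply (le_real_Lub_Rbar _ C); [|exists x; auto].
  intros r (y & Hy & Hny & ->). eapply Rle_trans; [apply HC, Hy|]. nra.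
Qed.

Lemma dual_norm_nonneg f : dual_elt a u f -> 0 <= dual_norm a u f.
Proof.
  intros Hf. eapply Rle_trans; [apply Rabs_pos|].
  apply (Rabs_le_dual_norm f _ Hf c0_zero). rewrite read_norm_zero by reflexivity. lra.
Qed.

Lemma Rabs_le_dual_norm_mul f z :
  dual_elt a u f -> c0 z -> Rabs (f z) <= dual_norm a u f * read_norm a u z.
Proof.
  intros Hf Hz. destruct (c0_bounded z Hz) as [B HB].
  assert (HN := read_norm_nonneg z B HB). assert (Hf0 := dual_norm_nonneg f Hf).
  destruct (Req_dec (read_norm a u z) 0) as [E|E].
  - rewrite (dual_zero f z Hf), Rabs_R0; [nra|].
    intros k. apply Rabs_eq_0. assert (H := Rabs_le_read_norm z B k HB).
    assert (H' := Rabs_pos (z k)). lra.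
  - set (N := read_norm a u z) in *. assert (HNinv : 0 < / N) by (apply Rinv_0_lt_compat; lra).
    assert (Hscaled : Rabs (f (fun k => / N * z k)) <= dual_norm a u f).
    { apply Rabs_le_dual_norm; [exact Hf|apply c0_scal, Hz|].
      rewrite (read_norm_scal z B _ HB). fold N.
      rewrite Rabs_pos_eq, Rinv_l by lra. lra. }
    rewrite (dual_scal f z _ Hf Hz), Rabs_mult, (Rabs_pos_eq (/ N)) in Hscaled by lra.
    apply (Rmult_le_compat_l N) in Hscaled; [|lra].
    rewrite <- Rmult_assoc, Rinv_r, Rmult_1_l in Hscaled by exact E. lra.
Qed.

Lemma dual_comb f g al be :
  dual_elt a u f -> dual_elt a u g -> dual_elt a u (fun z => al * f z + be * g z).
Proof.
  intros Hf Hg. split.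
  - intros x y p q Hx Hy.
    rewrite (dual_lin f x y p q), (dual_lin g x y p q) by (reflexivity || assumption). ring.
  - destruct (dual_bound f Hf) as [C1 [HC10 HC1]], (dual_bound g Hg) as [C2 [HC20 HC2]].
    exists (Rabs al * C1 + Rabs be * C2). intros x Hx.
    specialize (HC1 x Hx). specialize (HC2 x Hx).
    eapply Rle_trans; [apply Rabs_triang|]. rewrite !Rabs_mult.
    assert (Hal := Rabs_pos al). assert (Hbe := Rabs_pos be).
    assert (Rabs al * Rabs (f x) <= Rabs al * (C1 * read_norm a u x))
      by (apply Rmult_le_compat_l; assumption).
    assert (Rabs be * Rabs (g x) <= Rabs be * (C2 * read_norm a u x))
      by (apply Rmult_le_compat_l; assumption).
    lra.
Qed.

Lemma dual_ext f g : (forall z, g z = f z) -> dual_elt a u f -> dual_elt a u g.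
Proof. intros E Hf. replace g with f by (extensionality z; auto). exact Hf. Qed.

Lemma dual_coord k : dual_elt a u (coord k).
Proof.
  split; [reflexivity|]. exists 1. intros x Hx. destruct (c0_bounded x Hx) as [B HB].
  rewrite Rmult_1_l. apply (Rabs_le_read_norm x B k HB).
Qed.

Lemma dual_const_0 : dual_elt a u (fun _ => 0).
Proof. split; [intros; ring|]. exists 0. intros x _. rewrite Rabs_R0. lra. Qed.

Lemma dual_fsum (F : nat -> (nat -> R) -> R) c M :
  (forall k, dual_elt a u (F k)) -> dual_elt a u (fun z => fsum (fun k => c k * F k z) M).
Proof.
  intros HF. induction M as [|M IH]; simpl; [exact dual_const_0|].
  apply (dual_ext (fun z => 1 * fsum (fun k => c k * F k z) M + c M * F M z));
    [intros; ring|].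
  apply dual_comb; auto.
Qed.

Lemma dual_read_pair n : dual_elt a u (fun z => read_pair a u z n).
Proof.
  split; [intros; apply read_pair_lin|].
  exists (INR (a n) + 1). intros x Hx. destruct (c0_bounded x Hx) as [B HB].
  rewrite Rmult_comm. apply read_pair_bound. intros k _. apply (Rabs_le_read_norm x B k HB).
Qed.

Lemma dual_trunc f z K :
  dual_elt a u f -> f (trunc K z) = fsum (fun k => z k * f (unit_vec k)) K.
Proof.
  intros Hf. induction K as [|K IH]; simpl.
  - apply (dual_zero f); [exact Hf|reflexivity].
  - rewrite <- IH, (dual_lin f (trunc K z) (unit_vec K) 1 (z K));
      [ring|exact Hf|apply c0_trunc|apply c0_unit_vec|].
    intros j. unfold trunc, unit_vec.
    destruct (Nat.ltb_spec j K), (Nat.ltb_spec j (S K)), (Nat.eqb_spec j K); subst; try lia; ring.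
Qed.

Lemma dual_unit_vec_summable f : dual_elt a u f -> ex_series (fun k => Rabs (f (unit_vec k))).
Proof.
  intros Hf. destruct (dual_bound f Hf) as [C [HC0 HC]].
  refine (proj1 (ex_series_le_of_fsum_le _ (9 * C) (fun k => Rabs_pos _) _)).
  intros L. set (s := trunc L (fun j => sign (f (unit_vec j)))).
  assert (Hs : forall j, Rabs (s j) <= 1).
  { intros j. unfold s, trunc. destruct (Nat.ltb j L); [apply Rabs_sign_le|rewrite Rabs_R0; lra]. }
  assert (Hfs : f s = fsum (fun k => Rabs (f (unit_vec k))) L).
  { unfold s. rewrite dual_trunc by exact Hf. apply fsum_ext. intros k _. apply sign_mult_self. }
  rewrite <- Hfs. eapply Rle_trans; [apply Rle_abs|].
  eapply Rle_trans; [apply HC, c0_trunc|].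
  assert (H9 := read_norm_le s 1 Hs). nra.
Qed.

Lemma dual_tail_small f :
  dual_elt a u f -> forall eps, 0 < eps ->
  exists K0, forall K, (K0 <= K)%nat ->
  forall z, c0 z -> (forall j, Rabs (z j) <= 1) -> Rabs (f (tail K z)) <= eps.
Proof.
  intros Hf eps Heps. destruct (dual_bound f Hf) as [C [HC0 HC]].
  set (g := fun k => Rabs (f (unit_vec k))).
  destruct (Series_tail_lt g (dual_unit_vec_summable f Hf) eps Heps) as [K0 HK0].
  exists K0. intros K HK z Hz Hz1. apply Rle_plus_epsilon. intros d Hd.
  set (e := d / (9 * C + 1)). assert (He : 0 < e) by (unfold e; apply Rdiv_lt_0_compat; lra).
  assert (Hzl := Hz). apply is_lim_seq_spec in Hzl.
  destruct (Hzl (mkposreal e He)) as [L1 HL1]; simpl in HL1.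
  set (L := Nat.max K L1).
  assert (Hsplit : f (tail K z) = 1 * f (trunc L (tail K z)) + 1 * f (tail L z)).
  { apply (dual_lin f); [exact Hf|apply c0_trunc|apply c0_tail, Hz|].
    intros j. unfold trunc, tail, L.
    destruct (Nat.ltb_spec j K), (Nat.ltb_spec j (Nat.max K L1)); try lia; ring. }
  assert (Hnear : Rabs (f (trunc L (tail K z))) <= eps).
  { rewrite dual_trunc by exact Hf. eapply Rle_trans; [apply Rabs_fsum_le|].
    eapply Rle_trans; [apply (fsum_le _ (fun k => if Nat.ltb k K then 0 else g k))|].
    - intros k _. unfold tail, g. destruct (Nat.ltb k K); [rewrite Rmult_0_l, Rabs_R0; lra|].
      rewrite Rabs_mult. assert (Hk := Hz1 k). assert (Hg := Rabs_pos (f (unit_vec k))). nra.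
    - assert (Hskip := fsum_skip_prefix g K L). rewrite Nat.min_l in Hskip by lia.
      assert (HL := fsum_le_Series g L (fun k => Rabs_pos _) (dual_unit_vec_summable f Hf)).
      specialize (HK0 K HK). lra. }
  assert (Hfar : Rabs (f (tail L z)) <= d).
  { assert (Hb : forall j, Rabs (tail L z j) <= e).
    { intros j. unfold tail. destruct (Nat.ltb_spec j L); [rewrite Rabs_R0; lra|].
      specialize (HL1 j ltac:(lia)). rewrite Rminus_0_r in HL1. lra. }
    eapply Rle_trans; [apply HC, c0_tail, Hz|].
    assert (H9 := read_norm_le _ e Hb). assert (HN := read_norm_nonneg _ e Hb).
    assert (Hd' : C * (9 * e) <= d).
    { unfold e. apply (Rmult_le_reg_r (9 * C + 1)); [lra|]. field_simplify; nra. }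
    nra. }
  rewrite Hsplit, !Rmult_1_l. eapply Rle_trans; [apply Rabs_triang|lra].
Qed.

(** * The bidual space *)

Definition coords (P : ((nat -> R) -> R) -> R) (k : nat) : R := P (coord k).

Lemma bidual_lin P f g al be h :
  bidual_elt a u P -> dual_elt a u f -> dual_elt a u g ->
  (forall z, h z = al * f z + be * g z) -> P h = al * P f + be * P g.
Proof.
  intros [Hlin _] Hf Hg Hh.
  replace h with (fun z => al * f z + be * g z) by (extensionality z; rewrite Hh; reflexivity).
  apply Hlin; assumption.
Qed.

Lemma bidual_zero P : bidual_elt a u P -> P (fun _ => 0) = 0.
Proof.
  intros HP. rewrite (bidual_lin P _ _ 0 0 _ HP dual_const_0 dual_const_0) by (intros; ring). ring.
Qed.

Lemma bidual_fsum P (F : nat -> (nat -> R) -> R) c M :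
  bidual_elt a u P -> (forall k, dual_elt a u (F k)) ->
  P (fun z => fsum (fun k => c k * F k z) M) = fsum (fun k => c k * P (F k)) M.
Proof.
  intros HP HF. induction M as [|M IH]; simpl; [apply bidual_zero, HP|].
  rewrite (bidual_lin P _ (F M) 1 (c M) _ HP (dual_fsum F c M HF) (HF M)) by (intros; ring).
  rewrite IH. ring.
Qed.

Lemma bidual_read_pair P n :
  bidual_elt a u P -> P (fun z => read_pair a u z n) = read_pair a u (coords P) n.
Proof.
  intros HP.
  assert (Hrep : forall z, read_pair a u z n
    = 1 * fsum (fun k => Q2R (u n k) * coord k z) (a n) + (-1) * coord (a n) z).
  { intros z. unfold read_pair, coord.
    rewrite (fsum_ext _ (fun k => Q2R (u n k) * z k)) by (intros; ring). ring. }
  rewrite (bidual_lin P _ _ 1 (-1) _ HP (dual_fsum coord _ _ dual_coord) (dual_coord (a n)) Hrep).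
  rewrite (bidual_fsum P coord) by (exact HP || exact dual_coord).
  unfold read_pair, coords.
  rewrite (fsum_ext (fun k => P (coord k) * Q2R (u n k)) (fun k => Q2R (u n k) * P (coord k)))
    by (intros; ring).
  ring.
Qed.

Lemma bidual_bound P :
  bidual_elt a u P ->
  exists C, 0 <= C /\ forall g, dual_elt a u g -> Rabs (P g) <= C * dual_norm a u g.
Proof.
  intros [_ [C HC]]. exists (Rabs C). split; [apply Rabs_pos|]. intros g Hg.
  eapply Rle_trans; [apply HC, Hg|].
  apply Rmult_le_compat_r; [apply dual_norm_nonneg, Hg|apply Rle_abs].
Qed.

Lemma Rabs_le_bidual_norm P f :
  bidual_elt a u P -> dual_elt a u f -> dual_norm a u f <= 1 -> Rabs (P f) <= bidual_norm a u P.
Proof.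
  intros HP Hf Hn. destruct (bidual_bound P HP) as [C [HC0 HC]].
  apply (le_real_Lub_Rbar _ C); [|exists f; auto].
  intros r (g & Hg & Hgn & ->). eapply Rle_trans; [apply HC, Hg|].
  assert (Hg0 := dual_norm_nonneg g Hg). nra.
Qed.

Lemma bidual_add P P2 :
  bidual_elt a u P -> bidual_elt a u P2 -> bidual_elt a u (fun f => P f + P2 f).
Proof.
  intros HP HP2. split.
  - intros f g al be Hf Hg.
    rewrite (proj1 HP f g al be Hf Hg), (proj1 HP2 f g al be Hf Hg). ring.
  - destruct (bidual_bound P HP) as [C1 [_ HC1]], (bidual_bound P2 HP2) as [C2 [_ HC2]].
    exists (C1 + C2). intros f Hf. specialize (HC1 f Hf). specialize (HC2 f Hf).
    eapply Rle_trans; [apply Rabs_triang|lra].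
Qed.

Lemma bidual_approx P f :
  bidual_elt a u P -> dual_elt a u f -> forall eps, 0 < eps ->
  exists K0, forall K, (K0 <= K)%nat -> Rabs (P f - f (trunc K (coords P))) <= eps.
Proof.
  intros HP Hf eps Heps. destruct (bidual_bound P HP) as [C [HC0 HC]].
  set (e := eps / (C + 1)). assert (He : 0 < e) by (unfold e; apply Rdiv_lt_0_compat; lra).
  destruct (dual_tail_small f Hf e He) as [K0 HK0]. exists K0. intros K HK.
  set (FK := fun z => fsum (fun k => f (unit_vec k) * coord k z) K).
  assert (HFK : dual_elt a u FK) by (apply dual_fsum, dual_coord).
  set (rest := fun z => 1 * f z + (-1) * FK z).
  assert (Hrest : dual_elt a u rest) by (apply dual_comb; assumption).
  assert (Hrest_tail : forall z, c0 z -> rest z = f (tail K z)).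
  { intros z Hz. unfold rest, FK, coord.
    rewrite (dual_lin f (trunc K z) (tail K z) 1 1 z Hf (c0_trunc K z) (c0_tail K z Hz))
      by (intros j; rewrite (trunc_add_tail K z j); ring).
    rewrite dual_trunc by exact Hf.
    rewrite (fsum_ext (fun k => f (unit_vec k) * z k) (fun k => z k * f (unit_vec k)))
      by (intros; ring).
    ring. }
  assert (Hrest_norm : dual_norm a u rest <= e).
  { apply dual_norm_le; [lra|]. intros z Hz Hn. destruct (c0_bounded z Hz) as [B HB].
    rewrite Hrest_tail by exact Hz. apply HK0; [exact HK|exact Hz|].
    intros j. eapply Rle_trans; [apply (Rabs_le_read_norm z B j HB)|exact Hn]. }
  assert (HPrest : P rest = P f - f (trunc K (coords P))).
  { unfold rest. rewrite (bidual_lin P f FK 1 (-1) _ HP Hf HFK) by reflexivity.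
    unfold FK. rewrite (bidual_fsum P coord) by (exact HP || exact dual_coord).
    rewrite dual_trunc by exact Hf. unfold coords.
    rewrite (fsum_ext (fun k => f (unit_vec k) * P (coord k))
                      (fun k => P (coord k) * f (unit_vec k))) by (intros; ring).
    ring. }
  rewrite <- HPrest. eapply Rle_trans; [apply HC, Hrest|].
  assert (HCe : C * e <= eps).
  { unfold e. apply (Rmult_le_reg_r (C + 1)); [lra|]. field_simplify; nra. }
  assert (Hn0 := dual_norm_nonneg rest Hrest). nra.
Qed.

Lemma Rabs_coords_plus_fsum_le P k M :
  bidual_elt a u P ->
  Rabs (coords P k) + fsum (read_term a u (coords P)) M <= bidual_norm a u P.
Proof.
  intros HP. set (x := coords P).
  set (c := fun n => weight a n * sign (read_pair a u x n)).
  set (F := fun z => sign (x k) * coord k z + 1 * fsum (fun n => c n * read_pair a u z n) M).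
  assert (HF : dual_elt a u F).
  { apply dual_comb; [apply dual_coord|]. apply dual_fsum. intros n. apply dual_read_pair. }
  assert (HFn : dual_norm a u F <= 1).
  { apply dual_norm_le; [lra|]. intros z Hz Hn. destruct (c0_bounded z Hz) as [B HB].
    destruct (read_terms_summable z B HB) as [Hex _].
    assert (Hpart := fsum_le_Series _ M (read_term_nonneg a u z) Hex).
    assert (Hsum : Rabs (fsum (fun n => c n * read_pair a u z n) M) <= fsum (read_term a u z) M).
    { eapply Rle_trans; [apply Rabs_fsum_le|]. apply fsum_le. intros n _. unfold c, read_term.
      rewrite Rmult_assoc, Rabs_mult, (Rabs_pos_eq (weight a n)) by (apply Rlt_le, weight_pos).
      apply Rmult_le_compat_l; [apply Rlt_le, weight_pos|apply Rabs_sign_mult_le]. }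
    assert (Hk := Rabs_sign_mult_le (x k) (z k)). assert (Hsup := sup_norm_ge z B k HB).
    rewrite read_norm_unfold in Hn. unfold F, coord.
    eapply Rle_trans; [apply Rabs_triang|]. rewrite Rmult_1_l. lra. }
  assert (HPF : P F = Rabs (x k) + fsum (read_term a u x) M).
  { unfold F.
    rewrite (bidual_lin P (coord k) _ (sign (x k)) 1 _ HP (dual_coord k)
               (dual_fsum _ c M dual_read_pair)) by reflexivity.
    rewrite (bidual_fsum P (fun n z => read_pair a u z n)) by (exact HP || exact dual_read_pair).
    change (P (coord k)) with (x k). rewrite sign_mult_self, Rmult_1_l. f_equal.
    apply fsum_ext. intros n _. rewrite bidual_read_pair by exact HP.
    unfold c, read_term. rewrite Rmult_assoc, sign_mult_self. reflexivity. }
  rewrite <- HPF. eapply Rle_trans; [apply Rle_abs|apply Rabs_le_bidual_norm; assumption].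
Qed.

Lemma coords_bounded P k : bidual_elt a u P -> Rabs (coords P k) <= bidual_norm a u P.
Proof. intros HP. assert (H := Rabs_coords_plus_fsum_le P k O HP). simpl in H. lra. Qed.

Lemma read_norm_coords_le P : bidual_elt a u P -> read_norm a u (coords P) <= bidual_norm a u P.
Proof.
  intros HP. set (x := coords P).
  assert (Hsum : forall M, fsum (read_term a u x) M <= bidual_norm a u P - sup_norm x).
  { intros M. enough (sup_norm x <= bidual_norm a u P - fsum (read_term a u x) M) by lra.
    apply sup_norm_le. intros k.
    assert (H := Rabs_coords_plus_fsum_le P k M HP). fold x in H. lra. }
  destruct (ex_series_le_of_fsum_le _ _ (read_term_nonneg a u x) Hsum) as [_ Hs].
  rewrite read_norm_unfold. lra.
Qed.

Lemma Rabs_bidual_le_read_norm_coords P f :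
  bidual_elt a u P -> dual_elt a u f -> dual_norm a u f <= 1 ->
  Rabs (P f) <= read_norm a u (coords P).
Proof.
  intros HP Hf Hfn. set (x := coords P). set (B := bidual_norm a u P).
  assert (Hx : forall k, Rabs (x k) <= B) by (intros k; apply coords_bounded, HP).
  assert (HB : 0 <= B) by (eapply Rle_trans; [apply Rabs_pos|apply (Hx O)]).
  apply Rle_plus_epsilon. intros d Hd.
  destruct (bidual_approx P f HP Hf (d / 2) ltac:(lra)) as [K0 HK0].
  assert (Hhalf : Rabs (/ 2) < 1) by (rewrite Rabs_right; lra).
  assert (Hd' : 0 < d / (2 * (8 * B + 1))) by (apply Rdiv_lt_0_compat; lra).
  destruct (pow_lt_1_zero (/ 2) Hhalf _ Hd') as [K1 HK1].
  set (K := Nat.max K0 K1). specialize (HK0 K ltac:(lia)). specialize (HK1 K ltac:(lia)).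
  fold x in HK0. rewrite Rabs_right in HK1 by (apply Rle_ge, pow_le; lra).
  assert (Hsmall : 8 * B * (/ 2) ^ K <= d / 2).
  { apply (Rle_trans _ (8 * B * (d / (2 * (8 * B + 1))))); [apply Rmult_le_compat_l; lra|].
    apply (Rmult_le_reg_r (2 * (8 * B + 1))); [lra|]. field_simplify; nra. }
  assert (Htrunc := read_norm_trunc x B K Hx).
  assert (Hf_trunc : Rabs (f (trunc K x)) <= read_norm a u (trunc K x)).
  { eapply Rle_trans; [apply (Rabs_le_dual_norm_mul f _ Hf (c0_trunc K x))|].
    assert (HN : 0 <= read_norm a u (trunc K x)).
    { apply (read_norm_nonneg _ B). intros j. unfold trunc.
      destruct (Nat.ltb j K); [apply Hx|rewrite Rabs_R0; exact HB]. }
    nra. }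
  replace (P f) with ((P f - f (trunc K x)) + f (trunc K x)) by ring.
  eapply Rle_trans; [apply Rabs_triang|lra].
Qed.

Lemma bidual_norm_coords P :
  bidual_elt a u P -> bidual_norm a u P = read_norm a u (coords P).
Proof.
  intros HP. apply Rle_antisym; [|apply read_norm_coords_le, HP].
  apply real_Lub_Rbar_le.
  - apply (read_norm_nonneg _ (bidual_norm a u P)). intros k. apply coords_bounded, HP.
  - intros r (f & Hf & Hfn & ->). apply Rabs_bidual_le_read_norm_coords; assumption.
Qed.

Lemma bidual_eq_of_coords P P2 :
  bidual_elt a u P -> bidual_elt a u P2 -> (forall k, coords P k = coords P2 k) ->
  bidual_eq a u P P2.
Proof.
  intros HP HP2 Hx f Hf.
  assert (Hc : coords P = coords P2) by (extensionality k; apply Hx).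
  apply Rminus_diag_uniq, Rabs_eq_0, Rle_antisym; [|apply Rabs_pos].
  apply Rle_plus_epsilon. intros e He. rewrite Rplus_0_l.
  destruct (bidual_approx P f HP Hf (e / 2) ltac:(lra)) as [K1 HK1].
  destruct (bidual_approx P2 f HP2 Hf (e / 2) ltac:(lra)) as [K2 HK2].
  set (K := Nat.max K1 K2). specialize (HK1 K ltac:(lia)). specialize (HK2 K ltac:(lia)).
  rewrite Hc in HK1.
  replace (P f - P2 f) with ((P f - f (trunc K (coords P2))) - (P2 f - f (trunc K (coords P2))))
    by ring.
  eapply Rle_trans; [apply Rabs_triang|]. rewrite Rabs_Ropp. lra.
Qed.

(** * Strict convexity *)

Lemma read_norm_add_same_sign x y B :
  (forall k, Rabs (x k) <= B) -> (forall k, Rabs (y k) <= B) ->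
  read_norm a u x + read_norm a u y <= read_norm a u (fun k => x k + y k) ->
  forall n, 0 <= read_pair a u x n * read_pair a u y n.
Proof.
  intros Hx Hy Hadd. set (s := fun k => x k + y k) in *.
  assert (Hs : forall k, Rabs (s k) <= 2 * B).
  { intros k. unfold s. eapply Rle_trans; [apply Rabs_triang|].
    specialize (Hx k). specialize (Hy k). lra. }
  assert (Hpair : forall n, read_pair a u s n = read_pair a u x n + read_pair a u y n).
  { intros n. rewrite (read_pair_ext s (fun k => 1 * x k + 1 * y k)), read_pair_lin
      by (intros; unfold s; ring).
    ring. }
  set (d := fun n => read_term a u x n + read_term a u y n - read_term a u s n).
  assert (Hd0 : forall n, 0 <= d n).
  { intros n. unfold d, read_term. rewrite Hpair. assert (Hw := weight_pos a n).
    assert (Ht := Rabs_triang (read_pair a u x n) (read_pair a u y n)). nra. }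
  destruct (read_terms_summable x B Hx) as [Hxe _], (read_terms_summable y B Hy) as [Hye _],
    (read_terms_summable s _ Hs) as [Hse _].
  assert (Hxye := ex_series_plus _ _ Hxe Hye).
  assert (Hde : ex_series d) by exact (ex_series_minus _ _ Hxye Hse).
  assert (HSd : Series d
    = Series (read_term a u x) + Series (read_term a u y) - Series (read_term a u s)).
  { unfold d. rewrite Series_minus, Series_plus by assumption. reflexivity. }
  assert (Hsup : sup_norm s <= sup_norm x + sup_norm y).
  { apply sup_norm_le. intros k. unfold s. eapply Rle_trans; [apply Rabs_triang|].
    assert (H1 := sup_norm_ge x B k Hx). assert (H2 := sup_norm_ge y B k Hy). lra. }
  rewrite !read_norm_unfold in Hadd.
  intros n. apply Rabs_plus_eq_mult_nonneg.
  assert (Hdn := nonneg_Series_le_0 d Hd0 Hde ltac:(lra) n).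
  unfold d, read_term in Hdn. rewrite Hpair in Hdn.
  assert (Hw := weight_pos a n).
  assert (Hz : weight a n * (Rabs (read_pair a u x n) + Rabs (read_pair a u y n)
                              - Rabs (read_pair a u x n + read_pair a u y n)) = 0) by lra.
  apply Rmult_integral in Hz as [Hz|Hz]; lra.
Qed.

Lemma read_norm_proportional_eq x y B :
  (forall k, Rabs (x k) <= B) -> (forall i j, x i * y j = x j * y i) ->
  read_norm a u x <= 1 -> read_norm a u y <= 1 -> 2 <= read_norm a u (fun k => x k + y k) ->
  forall k, x k = y k.
Proof.
  intros Hx Hprop Hnx Hny Hnxy.
  destruct (classic (forall k, x k = 0)) as [H0|[i Hi]%not_all_ex_not].
  - replace (fun k => x k + y k) with y in Hnxy by (extensionality k; rewrite H0; ring). lra.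
  - set (lam := y i / x i).
    assert (Hyl : forall k, y k = lam * x k).
    { intros k. apply (Rmult_eq_reg_l (x i)); [|exact Hi].
      rewrite (Hprop i k). unfold lam. field. exact Hi. }
    replace y with (fun k => lam * x k) in Hny by (extensionality k; auto).
    replace (fun k => x k + y k) with (fun k => (1 + lam) * x k) in Hnxy
      by (extensionality k; rewrite Hyl; ring).
    rewrite (read_norm_scal x B) in Hny, Hnxy by exact Hx.
    assert (HN := read_norm_nonneg x B Hx).
    assert (Htri : Rabs (1 + lam) <= 1 + Rabs lam)
      by (eapply Rle_trans; [apply Rabs_triang|rewrite Rabs_R1; lra]).
    assert (HN1 : read_norm a u x = 1) by nra.
    rewrite HN1 in Hny, Hnxy.
    assert (Hlam : lam = 1) by (unfold Rabs in *; repeat destruct Rcase_abs; lra).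
    intros k. rewrite Hyl, Hlam. ring.
Qed.

Hypothesis u_dense :
  forall v : nat -> Q, c00Q v -> forall m, exists n, (m <= n)%nat /\ forall k, (u n k == v k)%Q.

Lemma read_pair_two_point n i j (t s : Q) z :
  i <> j -> (i < a n)%nat -> (j < a n)%nat ->
  (forall k, (u n k == if Nat.eqb k i then t else if Nat.eqb k j then s else 0)%Q) ->
  read_pair a u z n = z i * Q2R t + z j * Q2R s - z (a n).
Proof.
  intros Hij Hi Hj Hu. unfold read_pair. f_equal.
  rewrite (fsum_ext _ (fun k => (if Nat.eqb k i then z i * Q2R t else 0)
                                + (if Nat.eqb k j then z j * Q2R s else 0))).
  - rewrite fsum_plus, !fsum_indicator.
    destruct (Nat.ltb_spec i (a n)), (Nat.ltb_spec j (a n)); [reflexivity|lia..].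
  - intros k _. rewrite (Qeq_eqR _ _ (Hu k)).
    destruct (Nat.eqb_spec k i), (Nat.eqb_spec k j); subst; try lia; try ring.
    unfold Q2R; simpl; field.
Qed.

Lemma same_sign_pairs_proportional x y :
  (forall k, Rabs (x k) <= 1) -> (forall k, Rabs (y k) <= 1) ->
  (forall n, 0 <= read_pair a u x n * read_pair a u y n) ->
  forall i j, x i * y j = x j * y i.
Proof.
  intros Hx Hy Hsign i j.
  destruct (Req_dec (x i * y j - x j * y i) 0) as [E|E]; [lra|exfalso].
  assert (Hij : i <> j) by (intros ->; apply E; ring).
  (* Solve t0 x_i + s0 x_j = 3 and t0 y_i + s0 y_j = -3 and take n with
     u_n a rational approximation of t0 e_i + s0 e_j: the pairings of x and y
     with u_n - e_{a_n} then have opposite signs. *)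
  set (D := x i * y j - x j * y i) in *.
  set (t0 := 3 * (y j + x j) / D). set (s0 := - 3 * (x i + y i) / D).
  assert (Ex : t0 * x i + s0 * x j = 3) by (unfold t0, s0, D in *; field; exact E).
  assert (Ey : t0 * y i + s0 * y j = - 3) by (unfold t0, s0, D in *; field; exact E).
  destruct (Q2R_approx t0) as [t Ht], (Q2R_approx s0) as [s Hs].
  set (v := fun k => if Nat.eqb k i then t else if Nat.eqb k j then s else 0%Q).
  assert (Hv : c00Q v).
  { exists (S (Nat.max i j)). intros k Hk. unfold v.
    destruct (Nat.eqb_spec k i), (Nat.eqb_spec k j); try lia; reflexivity. }
  destruct (u_dense v Hv (S (Nat.max i j))) as [n [Hn Hun]].
  assert (Han := a_gt n).
  assert (Hpair := fun z => read_pair_two_point n i j t s z Hij ltac:(lia) ltac:(lia) Hun).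
  assert (Happrox : forall z, (forall k, Rabs (z k) <= 1) ->
    Rabs (z i * Q2R t + z j * Q2R s - (t0 * z i + s0 * z j)) <= 1).
  { intros z Hz.
    replace (z i * Q2R t + z j * Q2R s - (t0 * z i + s0 * z j))
      with (z i * (Q2R t - t0) + z j * (Q2R s - s0)) by ring.
    eapply Rle_trans; [apply Rabs_triang|]. rewrite !Rabs_mult.
    assert (Hzi := Hz i). assert (Hzj := Hz j).
    assert (H1 := Rabs_pos (Q2R t - t0)). assert (H2 := Rabs_pos (Q2R s - s0)). nra. }
  assert (Bx := Happrox x Hx). assert (By := Happrox y Hy). rewrite Ex in Bx. rewrite Ey in By.
  assert (Hxn := Hx (a n)). assert (Hyn := Hy (a n)).
  apply Rabs_le_between in Bx, By, Hxn, Hyn.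
  specialize (Hsign n). rewrite !Hpair in Hsign. nra.
Qed.

Lemma read_norm_strictly_convex x y B :
  (forall k, Rabs (x k) <= B) -> (forall k, Rabs (y k) <= B) ->
  read_norm a u x <= 1 -> read_norm a u y <= 1 -> 2 <= read_norm a u (fun k => x k + y k) ->
  forall k, x k = y k.
Proof.
  intros Hx Hy Hnx Hny Hnxy.
  assert (Hx1 : forall k, Rabs (x k) <= 1)
    by (intros k; eapply Rle_trans; [apply (Rabs_le_read_norm x B k Hx)|exact Hnx]).
  assert (Hy1 : forall k, Rabs (y k) <= 1)
    by (intros k; eapply Rle_trans; [apply (Rabs_le_read_norm y B k Hy)|exact Hny]).
  apply (read_norm_proportional_eq x y B Hx); try assumption.
  apply same_sign_pairs_proportional; try assumption.
  apply (read_norm_add_same_sign x y B Hx Hy). lra.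
Qed.

End ReadNorm.

Lemma read_data_a_gt a u : read_data a u -> forall n, (n < a n)%nat.
Proof.
  intros (_ & Ha0 & Hinc & _) n. induction n as [|n IH]; [apply Ha0|]. specialize (Hinc n). lia.
Qed.

Theorem theorem2p4 (a : nat -> nat) (u : nat -> nat -> Q) :
  read_data a u ->
  forall P P2 : ((nat -> R) -> R) -> R,
    bidual_elt a u P -> bidual_elt a u P2 ->
    bidual_norm a u P = 1 -> bidual_norm a u P2 = 1 ->
    ~ bidual_eq a u P P2 ->
    bidual_norm a u (fun f => P f + P2 f) < 2.
Proof.
  intros Hdata P P2 HP HP2 HN HN2 Hneq.
  assert (a_gt := read_data_a_gt a u Hdata).
  destruct Hdata as (u_dense & _ & _ & _ & u_l1).
  assert (u_l1' : forall n, fsum (fun k => Rabs (Q2R (u n k))) (a n) <= INR (a n))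
    by (intros n; apply Rlt_le, u_l1).
  apply Rnot_le_lt. intros H2. apply Hneq.
  apply (bidual_eq_of_coords a u a_gt u_l1' P P2 HP HP2).
  apply (read_norm_strictly_convex a u a_gt u_l1' u_dense _ _ 1).
  - intros k. rewrite <- HN. apply (coords_bounded a u a_gt u_l1' P k HP).
  - intros k. rewrite <- HN2. apply (coords_bounded a u a_gt u_l1' P2 k HP2).
  - rewrite <- (bidual_norm_coords a u a_gt u_l1' P HP), HN. lra.
  - rewrite <- (bidual_norm_coords a u a_gt u_l1' P2 HP2), HN2. lra.
  - rewrite (bidual_norm_coords a u a_gt u_l1' _ (bidual_add a u a_gt u_l1' P P2 HP HP2)) in H2.
    exact H2.
Qed.
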